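(* Fix real parameters $A,B$ (the conserved momenta $p_\psi,p_\phi$ of the Lagrange top) and consider the reduced phase space with canonical coordinates $(\theta,p_\theta)$, $\theta\in(0,\pi)$, $\{\theta,p_\theta\}=1$, and the Hamiltonian $$H(\theta,p_\theta)=p_\theta^2+\frac{A^2+2AB\cos\theta+B^2}{\sin^2\theta}+\cos\theta .$$ Put $u=\cos\theta$, $v=\sin\theta\,p_\theta$, and for $E\in\mathbb R$ let $X_E$ be the elliptic curve $$X_E:\ y^2=f_E(x),\qquad f_E(x)=x^3-Ex^2-(1+2AB)x+E-A^2-B^2 ,$$ with its group law whose neutral element is the point at infinity (three affine points sum to zero iff they are collinear, and $-(x,y)=(x,-y)$). Then $P=(u,v)$ lies on $X_{H(\theta,p_\theta)}$. Define a point $(\tilde u,\tilde v)\in X_{H(\theta,p_\theta)}$ in one of three ways: 1. (addition) $(\tilde u,\tilde v)=P+P'$, where $P'=(\lambda,\mu)$, $\lambda$ is a fixed real parameter and $\mu=\mu(\theta,p_\theta)$ is a (locally smooth) branch of $\sqrt{f_{H(\theta,p_\theta)}(\lambda)}$; explicitly, with $m=(v-\mu)/(u-\lambda)$ and $H=H(\theta,p_\theta)$, $$\tilde u=-u-\lambda+H+m^2,\qquad \tilde v=-v-m(\tilde u-u);$$ 2. (doubling) $(\tilde u,\tilde v)=[2]P$; explicitly, with $m=\dfrac{3u^2-2Hu-1-2AB}{2v}$, $$\tilde u=-2u+H+m^2,\qquad \tilde v=-v-m(\tilde u-u);$$ 3. (tripling) $(\tilde u,\tilde v)=[3]P$. Define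 $(\tilde\theta,\tilde p_\theta)$ by $\cos\tilde\theta=\tilde u$, $\sin\tilde\theta\,\tilde p_\theta=\tilde v$ (on the open set where these are defined and $|\tilde u|<1$). Then the map $(\theta,p_\theta)\mapsto(\tilde\theta,\tilde p_\theta)$ is a canonical transformation of valence $c$, i.e. $\{\tilde\theta,\tilde p_\theta\}=c$, with $c=1,2,3$ in cases 1, 2, 3 respectively, and it preserves the Hamiltonian: $H(\tilde\theta,\tilde p_\theta)=H(\theta,p_\theta)$ (so it is an auto-Bäcklund transformation of the Lagrange top).
   Context: A canonical transformation of valence $c$ is a map $(q,p)\mapsto(\tilde q,\tilde p)$ whose Jacobian matrix $V$ satisfies $V^\top\Omega V=c\,\Omega$ with $\Omega=\begin{pmatrix}0&I\\-I&0\end{pmatrix}$; equivalently the canonical Poisson brackets of the new variables are $c$ times the canonical ones. An auto-Bäcklund transformation (in the Toda–Wadati sense) is a canonical transformation preserving the form of the Hamiltonian(s). The full Lagrange top Hamiltonian in Euler angles is $p_\theta^2+\frac{p_\phi^2+2\cos\theta\,p_\phi p_\psi+p_\psi^2}{\sin^2\theta}+\cos\theta$, with $A=p_\psi$, $B=p_\phi$ conserved. *)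

From Stdlib Require Import Reals.
Open Scope R_scope.

Definition Ham (A B th p : R) : R :=
  p ^ 2 + (A ^ 2 + 2 * A * B * cos th + B ^ 2) / (sin th) ^ 2 + cos th.

Definition fE (A B E x : R) : R :=
  x ^ 3 - E * x ^ 2 - (1 + 2 * A * B) * x + E - A ^ 2 - B ^ 2.

(* Chord addition on X_E of two affine points with distinct x-coordinates. *)
Definition add_slope (x1 y1 x2 y2 : R) : R := (y1 - y2) / (x1 - x2).
Definition add_x (E x1 y1 x2 y2 : R) : R :=
  - x1 - x2 + E + (add_slope x1 y1 x2 y2) ^ 2.
Definition add_y (E x1 y1 x2 y2 : R) : R :=
  - y1 - add_slope x1 y1 x2 y2 * (add_x E x1 y1 x2 y2 - x1).

(* Tangent doubling on X_E of an affine point with y <> 0. *)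
Definition dbl_slope (A B E x y : R) : R :=
  (3 * x ^ 2 - 2 * E * x - 1 - 2 * A * B) / (2 * y).
Definition dbl_x (A B E x y : R) : R := - 2 * x + E + (dbl_slope A B E x y) ^ 2.
Definition dbl_y (A B E x y : R) : R :=
  - y - dbl_slope A B E x y * (dbl_x A B E x y - x).

Definition tpl_x (A B E x y : R) : R :=
  add_x E x y (dbl_x A B E x y) (dbl_y A B E x y).
Definition tpl_y (A B E x y : R) : R :=
  add_y E x y (dbl_x A B E x y) (dbl_y A B E x y).

Definition theta_of (u : R) : R := acos u.
Definition ptheta_of (u v : R) : R := v / sin (acos u).

Definition T1_u (A B lam : R) (mu : R -> R -> R) (th p : R) : R :=
  add_x (Ham A B th p) (cos th) (sin th * p) lam (mu th p).
Definition T1_v (A B lam : R) (mu : R -> R -> R) (th p : R) : R :=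
  add_y (Ham A B th p) (cos th) (sin th * p) lam (mu th p).
Definition T2_u (A B th p : R) : R := dbl_x A B (Ham A B th p) (cos th) (sin th * p).
Definition T2_v (A B th p : R) : R := dbl_y A B (Ham A B th p) (cos th) (sin th * p).
Definition T3_u (A B th p : R) : R := tpl_x A B (Ham A B th p) (cos th) (sin th * p).
Definition T3_v (A B th p : R) : R := tpl_y A B (Ham A B th p) (cos th) (sin th * p).

Definition has_partials (F : R -> R -> R) (th p a b : R) : Prop :=
  derivable_pt_lim (fun t => F t p) th a /\ derivable_pt_lim (fun q => F th q) p b.

Definition poisson_bracket_eq (F G : R -> R -> R) (th p c : R) : Prop :=
  exists Ft Fp Gt Gp, has_partials F th p Ft Fp /\ has_partials G th p Gt Gp /\
    Ft * Gp - Fp * Gt = c.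

Definition continuous2_at (F : R -> R -> R) (th p : R) : Prop :=
  forall eps, 0 < eps -> exists del, 0 < del /\
    forall t q, Rabs (t - th) < del -> Rabs (q - p) < del ->
      Rabs (F t q - F th p) < eps.

Definition C1_sqrt_branch (A B lam : R) (mu : R -> R -> R) (th0 p0 del : R) : Prop :=
  exists dmt dmp : R -> R -> R,
    forall t q, Rabs (t - th0) < del -> Rabs (q - p0) < del ->
      mu t q ^ 2 = fE A B (Ham A B t q) lam /\
      has_partials mu t q (dmt t q) (dmp t q) /\
      continuous2_at dmt t q /\ continuous2_at dmp t q.

(* Write u = cos theta, v = sin theta p_theta and E = H.  For a point (x, y) of the
   moving curve X_E depending on (theta, p_theta), differentiating y^2 = f_E(x) and
   computing the Hamiltonian derivatives {x, E} = 2 y k, {y, E} = f_E'(x) k determine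
   {x, y} = (1 - x^2) k as soon as dE <> 0; k is the speed of the point with respect
   to the invariant vector field (2 y, f_E'(x)).  The phase point (u, v) has k = -1
   and (lambda, mu) has k = 0.  Since the Hamiltonian field of E fixes E, the chord
   and tangent constructions can be differentiated along it on a fixed curve, where
   translation invariance of dx / 2y makes speeds add; so P + P', [2]P, [3]P have
   k = -1, -2, -3, and {theta~, p~} = -{u~, v~} / (1 - u~^2) = c.  The Hamiltonian
   is preserved because the new point lies on X_E. *)

From Stdlib Require Import Reals Lra.
Open Scope R_scope.

Definition dfE (A B E x : R) : R := 3 * x ^ 2 - 2 * E * x - 1 - 2 * A * B.

(* Derivative of y^2 = f_E(x) along a direction; d f_E / d E = 1 - x^2. *)
Definition tangent_velocity (A B E x y Ee X Y : R) : Prop :=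
  2 * y * Y = dfE A B E x * X + (1 - x ^ 2) * Ee.

Definition bracket (Ft Fq Gt Gq : R) : R := Ft * Gq - Fq * Gt.

(* Derivatives of the chord and tangent formulas along a direction in which
   E, x1, y1, x2, y2 have derivatives Ee, X1, Y1, X2, Y2. *)
Definition dadd_slope (x1 y1 x2 y2 X1 Y1 X2 Y2 : R) : R :=
  ((Y1 - Y2) - add_slope x1 y1 x2 y2 * (X1 - X2)) / (x1 - x2).
Definition dadd_x (x1 y1 x2 y2 Ee X1 Y1 X2 Y2 : R) : R :=
  Ee + 2 * add_slope x1 y1 x2 y2 * dadd_slope x1 y1 x2 y2 X1 Y1 X2 Y2 - X1 - X2.
Definition dadd_y (E x1 y1 x2 y2 Ee X1 Y1 X2 Y2 : R) : R :=
  - Y1 - dadd_slope x1 y1 x2 y2 X1 Y1 X2 Y2 * (add_x E x1 y1 x2 y2 - x1)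
  - add_slope x1 y1 x2 y2 * (dadd_x x1 y1 x2 y2 Ee X1 Y1 X2 Y2 - X1).

Definition ddbl_slope (A B E x y Ee X Y : R) : R :=
  ((6 * x - 2 * E) * X - 2 * x * Ee - 2 * dbl_slope A B E x y * Y) / (2 * y).
Definition ddbl_x (A B E x y Ee X Y : R) : R :=
  - 2 * X + Ee + 2 * dbl_slope A B E x y * ddbl_slope A B E x y Ee X Y.
Definition ddbl_y (A B E x y Ee X Y : R) : R :=
  - Y - ddbl_slope A B E x y Ee X Y * (dbl_x A B E x y - x)
  - dbl_slope A B E x y * (ddbl_x A B E x y Ee X Y - X).

(** * Chords and tangents of X_E *)

Section Chord.

Variables (A B E x1 y1 x2 y2 : R).
Hypotheses (x12 : x1 <> x2) (on1 : y1 ^ 2 = fE A B E x1) (on2 : y2 ^ 2 = fE A B E x2).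

Let x12' : x1 - x2 <> 0 := Rminus_eq_contra _ _ x12.
Let x21' : x2 - x1 <> 0 := Rminus_eq_contra _ _ (not_eq_sym x12).

Lemma add_slope_line : y1 + add_slope x1 y1 x2 y2 * (x2 - x1) = y2.
Proof. unfold add_slope. field. exact x12'. Qed.

(* The difference of the two sides is linear in x and vanishes at x1 and x2. *)
Lemma add_x_chord x :
  fE A B E x - (y1 + add_slope x1 y1 x2 y2 * (x - x1)) ^ 2
  = (x - x1) * (x - x2) * (x - add_x E x1 y1 x2 y2).
Proof.
  apply Rminus_diag_uniq, (Rmult_eq_reg_l (x2 - x1)); [|exact x21'].
  transitivity ((x2 - x) * (fE A B E x1 - y1 ^ 2)
    + (x - x1) * (fE A B E x2 - (y1 + add_slope x1 y1 x2 y2 * (x2 - x1)) ^ 2)).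
  - unfold add_x, fE. ring.
  - rewrite add_slope_line, <- on1, <- on2. ring.
Qed.

Lemma add_x_chord_deriv x :
  dfE A B E x - 2 * add_slope x1 y1 x2 y2 * (y1 + add_slope x1 y1 x2 y2 * (x - x1))
  = (x - x2) * (x - add_x E x1 y1 x2 y2) + (x - x1) * (x - add_x E x1 y1 x2 y2)
    + (x - x1) * (x - x2).
Proof.
  apply Rminus_diag_uniq, (Rmult_eq_reg_l (x2 - x1)); [|exact x21'].
  transitivity ((fE A B E x2 - (y1 + add_slope x1 y1 x2 y2 * (x2 - x1)) ^ 2)
    - (fE A B E x1 - y1 ^ 2)).
  - unfold add_x, dfE, fE. ring.
  - rewrite add_slope_line, <- on1, <- on2. ring.
Qed.

Lemma add_on_curve : add_y E x1 y1 x2 y2 ^ 2 = fE A B E (add_x E x1 y1 x2 y2).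
Proof.
  pose proof (add_x_chord (add_x E x1 y1 x2 y2)) as C.
  unfold add_y. set (x3 := add_x E x1 y1 x2 y2) in *. nra.
Qed.


Lemma dadd_slope_line X1 Y1 X2 Y2 :
  Y1 + dadd_slope x1 y1 x2 y2 X1 Y1 X2 Y2 * (x2 - x1)
     + add_slope x1 y1 x2 y2 * (X2 - X1) = Y2.
Proof. unfold dadd_slope. field. exact x12'. Qed.

Lemma add_tangent Ee X1 Y1 X2 Y2 :
  tangent_velocity A B E x1 y1 Ee X1 Y1 -> tangent_velocity A B E x2 y2 Ee X2 Y2 ->
  tangent_velocity A B E (add_x E x1 y1 x2 y2) (add_y E x1 y1 x2 y2) Ee
    (dadd_x x1 y1 x2 y2 Ee X1 Y1 X2 Y2) (dadd_y E x1 y1 x2 y2 Ee X1 Y1 X2 Y2).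
Proof.
  unfold tangent_velocity. intros T1 T2.
  pose proof (add_x_chord (add_x E x1 y1 x2 y2)) as C3.
  pose proof add_slope_line as L.
  pose proof (dadd_slope_line X1 Y1 X2 Y2) as L'.
  unfold dadd_y, dadd_x, add_y in *.
  set (m := add_slope x1 y1 x2 y2) in *.
  set (M := dadd_slope x1 y1 x2 y2 X1 Y1 X2 Y2) in *.
  set (x3 := add_x E x1 y1 x2 y2) in *.
  set (X3 := Ee + 2 * m * M - X1 - X2).
  apply Rminus_diag_uniq, (Rmult_eq_reg_l (x2 - x1)); [|exact x21'].
  (* derivative of the interpolation identity behind add_x_chord, taken at x = x3 *)
  transitivity (
    (X2 - X1) * (fE A B E x3 - (y1 + m * (x3 - x1)) ^ 2)
    - (dfE A B E x1 * X1 + (1 - x1 ^ 2) * Ee - 2 * y1 * Y1) * (x2 - x3)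
    - (fE A B E x1 - y1 ^ 2) * (X2 - X3)
    - (dfE A B E x2 * X2 + (1 - x2 ^ 2) * Ee
       - 2 * (y1 + m * (x2 - x1)) * (Y1 + M * (x2 - x1) + m * (X2 - X1))) * (x3 - x1)
    - (fE A B E x2 - (y1 + m * (x2 - x1)) ^ 2) * (X3 - X1)).
  - unfold X3, x3, add_x, dfE, fE. fold m. ring.
  - rewrite L, L', C3, <- on1, <- on2, <- T1, <- T2. ring.
Qed.

Lemma add_slope_velocity k1 k2 :
  dadd_slope x1 y1 x2 y2 (2 * y1 * k1) (dfE A B E x1 * k1) (2 * y2 * k2) (dfE A B E x2 * k2)
  = (x1 - add_x E x1 y1 x2 y2) * k1 + (x2 - add_x E x1 y1 x2 y2) * k2.
Proof.
  pose proof (add_x_chord_deriv x1) as F1.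
  pose proof (add_x_chord_deriv x2) as F2.
  rewrite add_slope_line in F2.
  unfold dadd_slope.
  apply (Rmult_eq_reg_l (x1 - x2)); [|exact x12'].
  set (m := add_slope x1 y1 x2 y2) in *.
  transitivity ((dfE A B E x1 - 2 * m * (y1 + m * (x1 - x1))) * k1
    - (dfE A B E x2 - 2 * m * y2) * k2).
  - field. exact x12'.
  - rewrite F1, F2. ring.
Qed.

(* Infinitesimal form of the translation invariance of dx/2y: speeds add. *)
Lemma add_invariant_velocity k1 k2 :
  dadd_x x1 y1 x2 y2 0 (2 * y1 * k1) (dfE A B E x1 * k1) (2 * y2 * k2) (dfE A B E x2 * k2)
    = 2 * add_y E x1 y1 x2 y2 * (k1 + k2) /\
  dadd_y E x1 y1 x2 y2 0 (2 * y1 * k1) (dfE A B E x1 * k1) (2 * y2 * k2) (dfE A B E x2 * k2)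
    = dfE A B E (add_x E x1 y1 x2 y2) * (k1 + k2).
Proof.
  pose proof (add_x_chord_deriv x1) as F1.
  pose proof (add_x_chord_deriv (add_x E x1 y1 x2 y2)) as F3.
  pose proof add_slope_line as L.
  unfold dadd_y, dadd_x, add_y. rewrite add_slope_velocity.
  set (m := add_slope x1 y1 x2 y2) in *.
  set (x3 := add_x E x1 y1 x2 y2) in *.
  split.
  - rewrite <- L. ring.
  - rewrite <- L.
    replace (dfE A B E x3) with (2 * m * (y1 + m * (x3 - x1))
      + ((x3 - x2) * (x3 - x3) + (x3 - x1) * (x3 - x3) + (x3 - x1) * (x3 - x2))) by lra.
    replace (dfE A B E x1) with (2 * m * (y1 + m * (x1 - x1))
      + ((x1 - x2) * (x1 - x3) + (x1 - x1) * (x1 - x3) + (x1 - x1) * (x1 - x2))) by lra.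
    ring.
Qed.

End Chord.

Section Tangent.

Variables (A B E x1 y1 : R).
Hypotheses (y1_neq0 : y1 <> 0) (on1 : y1 ^ 2 = fE A B E x1).

Lemma dbl_slope_tangent : 2 * y1 * dbl_slope A B E x1 y1 = dfE A B E x1.
Proof. unfold dbl_slope, dfE. field. exact y1_neq0. Qed.

Lemma dbl_x_tangent x :
  fE A B E x - (y1 + dbl_slope A B E x1 y1 * (x - x1)) ^ 2
  = (x - x1) ^ 2 * (x - dbl_x A B E x1 y1).
Proof.
  apply Rminus_diag_uniq.
  transitivity ((fE A B E x1 - y1 ^ 2)
    + (dfE A B E x1 - 2 * y1 * dbl_slope A B E x1 y1) * (x - x1)).
  - unfold dbl_x, dfE, fE. ring.
  - rewrite dbl_slope_tangent, <- on1. ring.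
Qed.

Lemma dbl_x_tangent_deriv x :
  dfE A B E x - 2 * dbl_slope A B E x1 y1 * (y1 + dbl_slope A B E x1 y1 * (x - x1))
  = 2 * (x - x1) * (x - dbl_x A B E x1 y1) + (x - x1) ^ 2.
Proof.
  apply Rminus_diag_uniq.
  transitivity (dfE A B E x1 - 2 * y1 * dbl_slope A B E x1 y1).
  - unfold dbl_x, dfE. ring.
  - rewrite dbl_slope_tangent. ring.
Qed.

Lemma dbl_on_curve : dbl_y A B E x1 y1 ^ 2 = fE A B E (dbl_x A B E x1 y1).
Proof.
  pose proof (dbl_x_tangent (dbl_x A B E x1 y1)) as C.
  unfold dbl_y. set (x3 := dbl_x A B E x1 y1) in *. nra.
Qed.

Lemma ddbl_slope_tangent Ee X Y :
  2 * Y * dbl_slope A B E x1 y1 + 2 * y1 * ddbl_slope A B E x1 y1 Ee X Y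
  = (6 * x1 - 2 * E) * X - 2 * x1 * Ee.
Proof. unfold ddbl_slope. field. exact y1_neq0. Qed.

Lemma dbl_tangent Ee X Y :
  tangent_velocity A B E x1 y1 Ee X Y ->
  tangent_velocity A B E (dbl_x A B E x1 y1) (dbl_y A B E x1 y1) Ee
    (ddbl_x A B E x1 y1 Ee X Y) (ddbl_y A B E x1 y1 Ee X Y).
Proof.
  unfold tangent_velocity. intro T1.
  pose proof dbl_slope_tangent as L.
  pose proof (ddbl_slope_tangent Ee X Y) as L'.
  unfold ddbl_y, ddbl_x, dbl_y in *.
  set (m := dbl_slope A B E x1 y1) in *.
  set (M := ddbl_slope A B E x1 y1 Ee X Y) in *.
  set (x3 := dbl_x A B E x1 y1) in *.
  apply Rminus_diag_uniq.
  (* derivative of the identity behind dbl_x_tangent, taken at x = x3 *)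
  transitivity (
    - (dfE A B E x1 * X + (1 - x1 ^ 2) * Ee - 2 * y1 * Y)
    - ((6 * x1 - 2 * E) * X - 2 * x1 * Ee - (2 * Y * m + 2 * y1 * M)) * (x3 - x1)
    - (dfE A B E x1 - 2 * m * y1) * (- 3 * X + Ee + 2 * m * M)).
  - unfold x3, dbl_x, dfE. fold m. ring.
  - rewrite <- T1, <- L, L'. ring.
Qed.

Lemma dbl_invariant_velocity k :
  ddbl_x A B E x1 y1 0 (2 * y1 * k) (dfE A B E x1 * k)
    = 2 * dbl_y A B E x1 y1 * (2 * k) /\
  ddbl_y A B E x1 y1 0 (2 * y1 * k) (dfE A B E x1 * k)
    = dfE A B E (dbl_x A B E x1 y1) * (2 * k).
Proof.
  pose proof (dbl_x_tangent_deriv (dbl_x A B E x1 y1)) as F3.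
  rewrite <- dbl_slope_tangent.
  unfold ddbl_y, ddbl_x, ddbl_slope, dbl_y.
  set (m := dbl_slope A B E x1 y1) in *.
  set (x3 := dbl_x A B E x1 y1) in *.
  assert (Hx3 : x3 = - 2 * x1 + E + m ^ 2) by reflexivity.
  split.
  - rewrite Hx3. field. exact y1_neq0.
  - replace (dfE A B E x3) with (2 * m * (y1 + m * (x3 - x1))
      + (2 * (x3 - x1) * (x3 - x3) + (x3 - x1) ^ 2)) by lra.
    rewrite Hx3. field. exact y1_neq0.
Qed.

End Tangent.

(** * First-order jets of moving points *)

(* (Xt, Xq), (Yt, Yq), (Et, Eq) are the gradients of x, y, E.  The last two
   clauses say that the Hamiltonian field of E moves (x, y) with speed k with
   respect to the invariant vector field (2 y, f_E'(x)) of X_E. *)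
Definition curve_jet (A B E Et Eq x y Xt Xq Yt Yq k : R) : Prop :=
  y ^ 2 = fE A B E x /\
  tangent_velocity A B E x y Et Xt Yt /\
  tangent_velocity A B E x y Eq Xq Yq /\
  bracket Xt Xq Et Eq = 2 * y * k /\
  bracket Yt Yq Et Eq = dfE A B E x * k.

Lemma bracket_dadd_x x1 y1 x2 y2 Et Eq X1t X1q Y1t Y1q X2t X2q Y2t Y2q :
  bracket (dadd_x x1 y1 x2 y2 Et X1t Y1t X2t Y2t) (dadd_x x1 y1 x2 y2 Eq X1q Y1q X2q Y2q)
    Et Eq
  = dadd_x x1 y1 x2 y2 0 (bracket X1t X1q Et Eq) (bracket Y1t Y1q Et Eq)
      (bracket X2t X2q Et Eq) (bracket Y2t Y2q Et Eq).
Proof. unfold bracket, dadd_x, dadd_slope, Rdiv. ring. Qed.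

Lemma bracket_dadd_y E x1 y1 x2 y2 Et Eq X1t X1q Y1t Y1q X2t X2q Y2t Y2q :
  bracket (dadd_y E x1 y1 x2 y2 Et X1t Y1t X2t Y2t) (dadd_y E x1 y1 x2 y2 Eq X1q Y1q X2q Y2q)
    Et Eq
  = dadd_y E x1 y1 x2 y2 0 (bracket X1t X1q Et Eq) (bracket Y1t Y1q Et Eq)
      (bracket X2t X2q Et Eq) (bracket Y2t Y2q Et Eq).
Proof. unfold bracket, dadd_y, dadd_x, dadd_slope, Rdiv. ring. Qed.

Lemma bracket_ddbl_x A B E x y Et Eq Xt Xq Yt Yq :
  bracket (ddbl_x A B E x y Et Xt Yt) (ddbl_x A B E x y Eq Xq Yq) Et Eq
  = ddbl_x A B E x y 0 (bracket Xt Xq Et Eq) (bracket Yt Yq Et Eq).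
Proof. unfold bracket, ddbl_x, ddbl_slope, Rdiv. ring. Qed.

Lemma bracket_ddbl_y A B E x y Et Eq Xt Xq Yt Yq :
  bracket (ddbl_y A B E x y Et Xt Yt) (ddbl_y A B E x y Eq Xq Yq) Et Eq
  = ddbl_y A B E x y 0 (bracket Xt Xq Et Eq) (bracket Yt Yq Et Eq).
Proof. unfold bracket, ddbl_y, ddbl_x, ddbl_slope, Rdiv. ring. Qed.

Lemma add_jet A B E Et Eq x1 y1 X1t X1q Y1t Y1q k1 x2 y2 X2t X2q Y2t Y2q k2 :
  x1 <> x2 ->
  curve_jet A B E Et Eq x1 y1 X1t X1q Y1t Y1q k1 ->
  curve_jet A B E Et Eq x2 y2 X2t X2q Y2t Y2q k2 ->
  curve_jet A B E Et Eq (add_x E x1 y1 x2 y2) (add_y E x1 y1 x2 y2)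
    (dadd_x x1 y1 x2 y2 Et X1t Y1t X2t Y2t) (dadd_x x1 y1 x2 y2 Eq X1q Y1q X2q Y2q)
    (dadd_y E x1 y1 x2 y2 Et X1t Y1t X2t Y2t) (dadd_y E x1 y1 x2 y2 Eq X1q Y1q X2q Y2q)
    (k1 + k2).
Proof.
  intros x12 [on1 [T1t [T1q [V1 W1]]]] [on2 [T2t [T2q [V2 W2]]]].
  destruct (add_invariant_velocity A B E x1 y1 x2 y2 x12 on1 on2 k1 k2) as [Vx Vy].
  split; [exact (add_on_curve A B E x1 y1 x2 y2 x12 on1 on2)|].
  split; [exact (add_tangent A B E x1 y1 x2 y2 x12 on1 on2 _ _ _ _ _ T1t T2t)|].
  split; [exact (add_tangent A B E x1 y1 x2 y2 x12 on1 on2 _ _ _ _ _ T1q T2q)|].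
  rewrite bracket_dadd_x, bracket_dadd_y, V1, W1, V2, W2.
  split; assumption.
Qed.

Lemma dbl_jet A B E Et Eq x y Xt Xq Yt Yq k :
  y <> 0 ->
  curve_jet A B E Et Eq x y Xt Xq Yt Yq k ->
  curve_jet A B E Et Eq (dbl_x A B E x y) (dbl_y A B E x y)
    (ddbl_x A B E x y Et Xt Yt) (ddbl_x A B E x y Eq Xq Yq)
    (ddbl_y A B E x y Et Xt Yt) (ddbl_y A B E x y Eq Xq Yq) (2 * k).
Proof.
  intros y_neq0 [on [Tt [Tq [V W]]]].
  destruct (dbl_invariant_velocity A B E x y y_neq0 k) as [Vx Vy].
  split; [exact (dbl_on_curve A B E x y y_neq0 on)|].
  split; [exact (dbl_tangent A B E x y y_neq0 _ _ _ Tt)|].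
  split; [exact (dbl_tangent A B E x y y_neq0 _ _ _ Tq)|].
  rewrite bracket_ddbl_x, bracket_ddbl_y, V, W.
  split; assumption.
Qed.

(* If y = f_E'(x) = 0, the two tangency relations would force dE = 0. *)
Lemma curve_jet_bracket A B E Et Eq x y Xt Xq Yt Yq k :
  curve_jet A B E Et Eq x y Xt Xq Yt Yq k ->
  (Et <> 0 \/ Eq <> 0) -> 1 - x ^ 2 <> 0 ->
  bracket Xt Xq Yt Yq = (1 - x ^ 2) * k.
Proof.
  unfold curve_jet, tangent_velocity, bracket.
  intros [_ [Tt [Tq [V W]]]] E_crit x_unit.
  destruct (Req_dec y 0) as [y0|y_neq0].
  - subst y.
    destruct (Req_dec (dfE A B E x) 0) as [f0|f_neq0].
    + exfalso. rewrite f0 in Tt, Tq.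
      destruct E_crit as [E_neq0|E_neq0]; apply E_neq0;
        apply (Rmult_eq_reg_l (1 - x ^ 2)); auto; lra.
    + apply (Rmult_eq_reg_l (dfE A B E x)); [|exact f_neq0].
      transitivity (Yq * (dfE A B E x * Xt + (1 - x ^ 2) * Et)
        - Yt * (dfE A B E x * Xq + (1 - x ^ 2) * Eq) + (1 - x ^ 2) * (Yt * Eq - Yq * Et));
        [ring|].
      rewrite W, <- Tt, <- Tq. ring.
  - apply (Rmult_eq_reg_l (2 * y)); [|lra].
    transitivity (Xt * (2 * y * Yq) - Xq * (2 * y * Yt)); [ring|].
    rewrite Tt, Tq.
    transitivity ((1 - x ^ 2) * (Xt * Eq - Xq * Et)); [ring|].
    rewrite V. ring.
Qed.

(* A chord through a double point of X_E meets it there a second time. *)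
Lemma add_x_singular A B E x1 y1 x2 y2 :
  x1 <> x2 -> y1 ^ 2 = fE A B E x1 -> y2 ^ 2 = fE A B E x2 ->
  y1 = 0 -> dfE A B E x1 = 0 -> add_x E x1 y1 x2 y2 = x1.
Proof.
  intros x12 on1 on2 y1_0 f1_0.
  pose proof (add_x_chord_deriv A B E x1 y1 x2 y2 x12 on1 on2 x1) as F1.
  rewrite y1_0, f1_0 in F1.
  assert (Z : (x1 - x2) * (x1 - add_x E x1 0 x2 y2) = 0) by lra.
  rewrite y1_0.
  apply Rmult_integral in Z as [Z|Z]; [exfalso; apply x12|]; lra.
Qed.

(* The gradient of P1 is mapped by a matrix of determinant one. *)
Lemma bracket_add_singular A B E x1 x2 y2 X1t X1q Y1t Y1q Y2t Y2q :
  x1 <> x2 -> add_x E x1 0 x2 y2 = x1 ->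
  tangent_velocity A B E x2 y2 0 0 Y2t -> tangent_velocity A B E x2 y2 0 0 Y2q ->
  bracket (dadd_x x1 0 x2 y2 0 X1t Y1t 0 Y2t) (dadd_x x1 0 x2 y2 0 X1q Y1q 0 Y2q)
    (dadd_y E x1 0 x2 y2 0 X1t Y1t 0 Y2t) (dadd_y E x1 0 x2 y2 0 X1q Y1q 0 Y2q)
  = bracket X1t X1q Y1t Y1q.
Proof.
  unfold tangent_velocity. intros x12 x3_1 T2t T2q.
  assert (x12' := Rminus_eq_contra _ _ x12).
  assert (Y2_0 : y2 = 0 \/ (Y2t = 0 /\ Y2q = 0)).
  { destruct (Req_dec y2 0) as [y2_0|y2_neq0]; [left; exact y2_0|right].
    split; apply (Rmult_eq_reg_l (2 * y2)); lra. }
  unfold bracket, dadd_y, dadd_x, dadd_slope, add_slope. rewrite x3_1.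
  destruct Y2_0 as [->|[-> ->]]; field; exact x12'.
Qed.

Notation D := derivable_pt_lim.

Lemma D_ext f x l l' : D f x l -> l = l' -> D f x l'.
Proof. intros H ->; exact H. Qed.
Lemma D_const c x : D (fun _ => c) x 0.
Proof. exact (derivable_pt_lim_const c x). Qed.
Lemma D_plus f g x a b : D f x a -> D g x b -> D (fun t => f t + g t) x (a + b).
Proof. exact (derivable_pt_lim_plus f g x a b). Qed.
Lemma D_minus f g x a b : D f x a -> D g x b -> D (fun t => f t - g t) x (a - b).
Proof. exact (derivable_pt_lim_minus f g x a b). Qed.
Lemma D_opp f x a : D f x a -> D (fun t => - f t) x (- a).
Proof. exact (derivable_pt_lim_opp f x a). Qed.
Lemma D_mult f g x a b :
  D f x a -> D g x b -> D (fun t => f t * g t) x (a * g x + f x * b).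
Proof. exact (derivable_pt_lim_mult f g x a b). Qed.
Lemma D_div f g x a b : D f x a -> D g x b -> g x <> 0 ->
  D (fun t => f t / g t) x ((a * g x - b * f x) / (g x)²).
Proof. exact (derivable_pt_lim_div f g x a b). Qed.
Lemma D_pow f x a n :
  D f x a -> D (fun t => f t ^ n) x (INR n * f x ^ Init.Nat.pred n * a).
Proof. intro H. exact (derivable_pt_lim_comp f _ x a _ H (derivable_pt_lim_pow _ n)). Qed.

Ltac derive := repeat first
  [ eassumption | apply D_const | apply derivable_pt_lim_id
  | apply derivable_pt_lim_cos | apply derivable_pt_lim_sin
  | apply D_plus | apply D_minus | apply D_opp | apply D_div | apply D_pow
  | apply D_mult ].

Lemma D_unique_locally f g a l1 l2 del : 0 < del ->
  (forall t, Rabs (t - a) < del -> f t = g t) -> D f a l1 -> D g a l2 -> l1 = l2.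
Proof.
  intros del_pos fg Df Dg. apply (uniqueness_limite g a); [|exact Dg].
  intros eps eps_pos. destruct (Df eps eps_pos) as [d Hd].
  assert (dmin_pos : 0 < Rmin d del) by (apply Rmin_pos; [apply cond_pos|lra]).
  exists (mkposreal _ dmin_pos). intros h h_neq0 h_small. simpl in h_small.
  assert (h_d := Rlt_le_trans _ _ _ h_small (Rmin_l d del)).
  assert (h_del := Rlt_le_trans _ _ _ h_small (Rmin_r d del)).
  rewrite <- (fg (a + h)), <- (fg a); [now apply Hd| |].
  - rewrite Rminus_diag, Rabs_R0; lra.
  - now replace (a + h - a) with h by ring.
Qed.

Lemma D_fE A B e x a Ee X : D e a Ee -> D x a X ->
  D (fun s => fE A B (e s) (x s)) a (dfE A B (e a) (x a) * X + (1 - x a ^ 2) * Ee).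
Proof.
  intros De Dx. unfold fE, dfE.
  eapply D_ext; [derive|]. cbv beta; simpl INR; simpl pred. ring.
Qed.

Lemma add_derive (e x1 y1 x2 y2 : R -> R) a Ee X1 Y1 X2 Y2 :
  D e a Ee -> D x1 a X1 -> D y1 a Y1 -> D x2 a X2 -> D y2 a Y2 -> x1 a <> x2 a ->
  D (fun s => add_x (e s) (x1 s) (y1 s) (x2 s) (y2 s)) a
    (dadd_x (x1 a) (y1 a) (x2 a) (y2 a) Ee X1 Y1 X2 Y2) /\
  D (fun s => add_y (e s) (x1 s) (y1 s) (x2 s) (y2 s)) a
    (dadd_y (e a) (x1 a) (y1 a) (x2 a) (y2 a) Ee X1 Y1 X2 Y2).
Proof.
  intros De Dx1 Dy1 Dx2 Dy2 x12.
  assert (x12' := Rminus_eq_contra _ _ x12).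
  unfold add_y, add_x, add_slope, dadd_y, dadd_x, dadd_slope, add_x, add_slope.
  split; (eapply D_ext; [derive|]); cbv beta; simpl INR; simpl pred; unfold Rsqr; field;
    exact x12'.
Qed.

Lemma dbl_derive A B (e x y : R -> R) a Ee X Y :
  D e a Ee -> D x a X -> D y a Y -> y a <> 0 ->
  D (fun s => dbl_x A B (e s) (x s) (y s)) a (ddbl_x A B (e a) (x a) (y a) Ee X Y) /\
  D (fun s => dbl_y A B (e s) (x s) (y s)) a (ddbl_y A B (e a) (x a) (y a) Ee X Y).
Proof.
  intros De Dx Dy y_neq0.
  assert (y2_neq0 : 2 * y a <> 0) by lra.
  unfold dbl_y, dbl_x, dbl_slope, ddbl_y, ddbl_x, ddbl_slope, dbl_x, dbl_slope.
  split; (eapply D_ext; [derive|]); cbv beta; simpl INR; simpl pred; unfold Rsqr; field;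
    auto.
Qed.

Lemma add_partials (e x1 y1 x2 y2 : R -> R -> R) th p
    Et Eq X1t X1q Y1t Y1q X2t X2q Y2t Y2q :
  has_partials e th p Et Eq -> has_partials x1 th p X1t X1q ->
  has_partials y1 th p Y1t Y1q -> has_partials x2 th p X2t X2q ->
  has_partials y2 th p Y2t Y2q -> x1 th p <> x2 th p ->
  has_partials (fun t q => add_x (e t q) (x1 t q) (y1 t q) (x2 t q) (y2 t q)) th p
    (dadd_x (x1 th p) (y1 th p) (x2 th p) (y2 th p) Et X1t Y1t X2t Y2t)
    (dadd_x (x1 th p) (y1 th p) (x2 th p) (y2 th p) Eq X1q Y1q X2q Y2q) /\
  has_partials (fun t q => add_y (e t q) (x1 t q) (y1 t q) (x2 t q) (y2 t q)) th p
    (dadd_y (e th p) (x1 th p) (y1 th p) (x2 th p) (y2 th p) Et X1t Y1t X2t Y2t)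
    (dadd_y (e th p) (x1 th p) (y1 th p) (x2 th p) (y2 th p) Eq X1q Y1q X2q Y2q).
Proof.
  intros [Det Deq] [Dx1t Dx1q] [Dy1t Dy1q] [Dx2t Dx2q] [Dy2t Dy2q] x12.
  destruct (add_derive (fun t => e t p) _ _ _ _ _ _ _ _ _ _ Det Dx1t Dy1t Dx2t Dy2t x12)
    as [Dxt Dyt].
  destruct (add_derive (fun q => e th q) _ _ _ _ _ _ _ _ _ _ Deq Dx1q Dy1q Dx2q Dy2q x12)
    as [Dxq Dyq].
  split; split; assumption.
Qed.

Lemma dbl_partials A B (e x y : R -> R -> R) th p Et Eq Xt Xq Yt Yq :
  has_partials e th p Et Eq -> has_partials x th p Xt Xq -> has_partials y th p Yt Yq ->
  y th p <> 0 ->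
  has_partials (fun t q => dbl_x A B (e t q) (x t q) (y t q)) th p
    (ddbl_x A B (e th p) (x th p) (y th p) Et Xt Yt)
    (ddbl_x A B (e th p) (x th p) (y th p) Eq Xq Yq) /\
  has_partials (fun t q => dbl_y A B (e t q) (x t q) (y t q)) th p
    (ddbl_y A B (e th p) (x th p) (y th p) Et Xt Yt)
    (ddbl_y A B (e th p) (x th p) (y th p) Eq Xq Yq).
Proof.
  intros [Det Deq] [Dxt Dxq] [Dyt Dyq] y_neq0.
  destruct (dbl_derive A B (fun t => e t p) _ _ _ _ _ _ Det Dxt Dyt y_neq0) as [DXt DYt].
  destruct (dbl_derive A B (fun q => e th q) _ _ _ _ _ _ Deq Dxq Dyq y_neq0) as [DXq DYq].
  split; split; assumption.
Qed.

(** * Back to canonical coordinates *)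

Lemma D_acos u a du : D u a du -> -1 < u a < 1 ->
  D (fun s => acos (u s)) a (-1 / sqrt (1 - (u a)²) * du).
Proof.
  intros Du u_range.
  apply (derivable_pt_lim_comp u acos a du _ Du).
  apply (derive_pt_eq_1 _ _ _ (derivable_pt_acos _ u_range)), derive_pt_acos.
Qed.

Lemma D_sin_acos u a du : D u a du -> -1 < u a < 1 ->
  D (fun s => sin (acos (u s))) a (u a * (-1 / sqrt (1 - (u a)²) * du)).
Proof.
  intros Du u_range.
  pose proof (derivable_pt_lim_comp _ sin a _ _ (D_acos u a du Du u_range)
    (derivable_pt_lim_sin _)) as H.
  rewrite cos_acos in H by lra. exact H.
Qed.

Lemma chart_bracket (U V : R -> R -> R) th p Ut Uq Vt Vq c :
  has_partials U th p Ut Uq -> has_partials V th p Vt Vq -> -1 < U th p < 1 ->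
  bracket Ut Uq Vt Vq = - c * (1 - U th p ^ 2) ->
  poisson_bracket_eq (fun t q => theta_of (U t q))
    (fun t q => ptheta_of (U t q) (V t q)) th p c.
Proof.
  intros [DUt DUq] [DVt DVq] U_range UV.
  set (u := U th p) in *.
  assert (u2_pos : 0 < 1 - u²) by (unfold Rsqr; nra).
  set (S := sqrt (1 - u²)).
  assert (S_pos : 0 < S) by (apply sqrt_lt_R0; exact u2_pos).
  assert (S2 : S * S = 1 - u ^ 2) by (unfold S; rewrite sqrt_sqrt; [unfold Rsqr; ring|lra]).
  assert (sin_acos_u : sin (acos u) = S) by (apply sin_acos; lra).
  assert (sin_acos_neq0 : sin (acos u) <> 0) by lra.
  pose proof (D_div _ _ th _ _ DVt (D_sin_acos _ _ _ DUt U_range) sin_acos_neq0) as DPt.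
  pose proof (D_div _ _ p _ _ DVq (D_sin_acos _ _ _ DUq U_range) sin_acos_neq0) as DPq.
  cbv beta in DPt, DPq. fold u S in DPt, DPq. rewrite sin_acos_u in DPt, DPq.
  unfold poisson_bracket_eq, has_partials, theta_of, ptheta_of.
  do 4 eexists.
  split; [split; [exact (D_acos _ _ _ DUt U_range)|exact (D_acos _ _ _ DUq U_range)]|].
  split; [split; [exact DPt|exact DPq]|].
  fold u S. unfold bracket in UV.
  transitivity (- (Ut * Vq - Uq * Vt) / (S * S)).
  - clearbody S u. unfold Rsqr. field. lra.
  - rewrite UV, S2. field. nra.
Qed.

Lemma Ham_chart A B E x y : -1 < x < 1 -> y ^ 2 = fE A B E x ->
  Ham A B (theta_of x) (ptheta_of x y) = E.
Proof.
  intros x_range on. unfold Ham, theta_of, ptheta_of.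
  assert (x2_pos : 0 < 1 - x²) by (unfold Rsqr; nra).
  assert (S_pos : 0 < sqrt (1 - x²)) by (apply sqrt_lt_R0; exact x2_pos).
  assert (S2 : sqrt (1 - x²) * sqrt (1 - x²) = 1 - x ^ 2)
    by (rewrite sqrt_sqrt; [unfold Rsqr; ring|lra]).
  rewrite sin_acos, cos_acos by lra.
  set (S := sqrt (1 - x²)) in *.
  unfold fE in on.
  transitivity ((y ^ 2 + A ^ 2 + 2 * A * B * x + B ^ 2) / (S * S) + x); [field; lra|].
  rewrite S2, on. field. nra.
Qed.

(** * The Lagrange top *)

Lemma Ham_on_curve A B th p : 0 < th < PI ->
  (sin th * p) ^ 2 = fE A B (Ham A B th p) (cos th).
Proof.
  intro th_range. pose proof (sin_gt_0 th ltac:(lra) ltac:(lra)) as sin_pos.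
  pose proof (sin2_cos2 th) as sc. unfold Rsqr in sc.
  unfold fE, Ham. symmetry. apply Rminus_diag_uniq.
  transitivity ((p ^ 2 + (A ^ 2 + 2 * A * B * cos th + B ^ 2) / sin th ^ 2)
    * (1 - sin th ^ 2 - cos th ^ 2)); [field; lra|].
  replace (1 - sin th ^ 2 - cos th ^ 2) with 0 by (simpl; lra). ring.
Qed.

Lemma Ham_partials A B th p : 0 < th < PI ->
  exists Et, has_partials (Ham A B) th p Et (2 * p).
Proof.
  intro th_range. pose proof (sin_gt_0 th ltac:(lra) ltac:(lra)) as sin_pos.
  assert (sin2_neq0 : sin th ^ 2 <> 0) by (apply pow_nonzero; lra).
  unfold has_partials, Ham. eexists. split.
  - derive.
  - eapply D_ext; [derive|]. cbv beta; simpl INR; simpl pred; unfold Rsqr. field.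
Qed.

Lemma cos_partials th p : has_partials (fun t _ => cos t) th p (- sin th) 0.
Proof. split; [apply derivable_pt_lim_cos|apply D_const]. Qed.

Lemma sin_mul_partials th p : has_partials (fun t q => sin t * q) th p (cos th * p) (sin th).
Proof.
  split; (eapply D_ext; [derive|]); cbv beta; ring.
Qed.

Lemma const_partials c th p : has_partials (fun _ _ => c) th p 0 0.
Proof. split; apply D_const. Qed.

Lemma Ham_curve_tangent A B th p Et : 0 < th < PI ->
  D (fun t => Ham A B t p) th Et ->
  tangent_velocity A B (Ham A B th p) (cos th) (sin th * p) Et (- sin th) (cos th * p).
Proof.
  intros th_range DEt.
  assert (del_pos : 0 < Rmin th (PI - th)) by (apply Rmin_pos; lra).
  apply (D_unique_locally (fun t => (sin t * p) ^ 2)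
           (fun t => fE A B (Ham A B t p) (cos t)) th _ _ _ del_pos).
  - intros t t_near. apply Ham_on_curve.
    pose proof (Rmin_l th (PI - th)); pose proof (Rmin_r th (PI - th)).
    apply Rabs_def2 in t_near. lra.
  - eapply D_ext; [derive|]. cbv beta; simpl INR; simpl pred. ring.
  - exact (D_fE A B _ _ th _ _ DEt (derivable_pt_lim_cos th)).
Qed.

Lemma point_jet A B th p Et : 0 < th < PI ->
  D (fun t => Ham A B t p) th Et ->
  curve_jet A B (Ham A B th p) Et (2 * p) (cos th) (sin th * p)
    (- sin th) 0 (cos th * p) (sin th) (- 1).
Proof.
  intros th_range DEt. pose proof (sin_gt_0 th ltac:(lra) ltac:(lra)) as sin_pos.
  pose proof (sin2_cos2 th) as sc. unfold Rsqr in sc.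
  pose proof (Ham_curve_tangent A B th p Et th_range DEt) as Tt.
  unfold curve_jet, tangent_velocity, bracket in *.
  split; [exact (Ham_on_curve A B th p th_range)|].
  split; [exact Tt|].
  split; [replace (1 - cos th ^ 2) with (sin th ^ 2) by (simpl; lra); ring|].
  split; [ring|].
  apply (Rmult_eq_reg_l (sin th)); [|lra].
  transitivity (2 * (sin th * p) * (cos th * p) - sin th * sin th * Et); [ring|].
  rewrite Tt. simpl. replace (cos th * (cos th * 1)) with (1 - sin th * sin th) by lra.
  ring.
Qed.

Section SqrtBranch.

Variables (A B lam th p del : R) (e mu : R -> R -> R).
Hypotheses (del_pos : 0 < del)
  (mu_sqrt : forall t q, Rabs (t - th) < del -> Rabs (q - p) < del ->
     mu t q ^ 2 = fE A B (e t q) lam).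

Let th_near : Rabs (th - th) < del.
Proof. rewrite Rminus_diag, Rabs_R0. exact del_pos. Qed.
Let p_near : Rabs (p - p) < del.
Proof. rewrite Rminus_diag, Rabs_R0. exact del_pos. Qed.

Lemma sqrt_branch_tangent Et Eq dmt dmp :
  has_partials e th p Et Eq -> has_partials mu th p dmt dmp ->
  tangent_velocity A B (e th p) lam (mu th p) Et 0 dmt /\
  tangent_velocity A B (e th p) lam (mu th p) Eq 0 dmp.
Proof.
  intros [Det Deq] [Dmt Dmq]. unfold tangent_velocity. split.
  - apply (D_unique_locally (fun t => mu t p ^ 2) (fun t => fE A B (e t p) lam) th _ _ _
             del_pos (fun t t_near => mu_sqrt t p t_near p_near)).
    + eapply D_ext; [exact (D_pow _ _ _ 2 Dmt)|]. cbv beta; simpl INR; simpl pred. ring.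
    + exact (D_fE A B _ _ th _ _ Det (D_const lam th)).
  - apply (D_unique_locally (fun q => mu th q ^ 2) (fun q => fE A B (e th q) lam) p _ _ _
             del_pos (fun q q_near => mu_sqrt th q th_near q_near)).
    + eapply D_ext; [exact (D_pow _ _ _ 2 Dmq)|]. cbv beta; simpl INR; simpl pred. ring.
    + exact (D_fE A B _ _ p _ _ Deq (D_const lam p)).
Qed.

(* For lam = +-1 the value f_E(lam) does not depend on E. *)
Lemma sqrt_branch_locally_zero :
  lam ^ 2 = 1 -> mu th p = 0 ->
  forall t q, Rabs (t - th) < del -> Rabs (q - p) < del -> mu t q = 0.
Proof.
  intros lam_unit mu0 t q t_near q_near.
  assert (fE_const : fE A B (e t q) lam = fE A B (e th p) lam).
  { apply Rminus_diag_uniq.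
    transitivity ((e t q - e th p) * (1 - lam ^ 2)); [unfold fE; ring|].
    rewrite lam_unit. ring. }
  pose proof (mu_sqrt t q t_near q_near) as sq.
  rewrite fE_const, <- (mu_sqrt th p th_near p_near), mu0 in sq.
  simpl in sq. nra.
Qed.

Lemma sqrt_branch_jet Et Eq dmt dmp :
  has_partials e th p Et Eq -> has_partials mu th p dmt dmp ->
  curve_jet A B (e th p) Et Eq lam (mu th p) 0 0 dmt dmp 0.
Proof.
  intros De Dmu.
  destruct (sqrt_branch_tangent _ _ _ _ De Dmu) as [Tt Tq].
  split; [exact (mu_sqrt th p th_near p_near)|].
  split; [exact Tt|]. split; [exact Tq|].
  unfold bracket. split; [ring|]. rewrite Rmult_0_r.
  unfold tangent_velocity in Tt, Tq. rewrite Rmult_0_r, Rplus_0_l in Tt, Tq.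
  destruct (Req_dec (mu th p) 0) as [mu0|mu_neq0].
  - destruct (Req_dec (lam ^ 2) 1) as [lam_unit|lam_nonunit].
    + pose proof (sqrt_branch_locally_zero lam_unit mu0) as mu_zero.
      destruct Dmu as [Dmt Dmq].
      assert (dmt0 : dmt = 0).
      { apply (D_unique_locally (fun t => mu t p) (fun _ => 0) th _ _ _ del_pos);
          [|exact Dmt|apply D_const].
        intros t t_near. exact (mu_zero t p t_near p_near). }
      assert (dmp0 : dmp = 0).
      { apply (D_unique_locally (fun q => mu th q) (fun _ => 0) p _ _ _ del_pos);
          [|exact Dmq|apply D_const].
        intros q q_near. exact (mu_zero th q th_near q_near). }
      rewrite dmt0, dmp0. ring.
    + rewrite mu0 in Tt, Tq.
      assert (lam_nonunit' : 1 - lam ^ 2 <> 0) by lra.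
      assert (Et0 : Et = 0) by (apply (Rmult_eq_reg_l (1 - lam ^ 2)); lra).
      assert (Eq0 : Eq = 0) by (apply (Rmult_eq_reg_l (1 - lam ^ 2)); lra).
      rewrite Et0, Eq0. ring.
  - apply (Rmult_eq_reg_l (2 * mu th p)); [|lra].
    transitivity (2 * mu th p * dmt * Eq - 2 * mu th p * dmp * Et); [ring|].
    rewrite Tt, Tq. ring.
Qed.

End SqrtBranch.

Lemma jet_canonical A B (U V : R -> R -> R) th p Et Ut Uq Vt Vq c :
  has_partials U th p Ut Uq -> has_partials V th p Vt Vq ->
  curve_jet A B (Ham A B th p) Et (2 * p) (U th p) (V th p) Ut Uq Vt Vq (- c) ->
  (Et <> 0 \/ p <> 0) -> Rabs (U th p) < 1 ->
  poisson_bracket_eq (fun t q => theta_of (U t q))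
    (fun t q => ptheta_of (U t q) (V t q)) th p c /\
  Ham A B (theta_of (U th p)) (ptheta_of (U th p) (V th p)) = Ham A B th p.
Proof.
  intros DU DV UV_jet H_crit U_small.
  apply Rabs_def2 in U_small.
  split.
  - apply (chart_bracket U V th p _ _ _ _ c DU DV); [lra|].
    rewrite (curve_jet_bracket _ _ _ _ _ _ _ _ _ _ _ _ UV_jet); [ring| |nra].
    destruct H_crit; [left|right]; lra.
  - apply Ham_chart; [lra|apply UV_jet].
Qed.

Lemma addition_backlund A B lam (mu : R -> R -> R) th p del :
  0 < th < PI -> 0 < del -> C1_sqrt_branch A B lam mu th p del -> cos th <> lam ->
  Rabs (T1_u A B lam mu th p) < 1 ->
  poisson_bracket_eq (fun t q => theta_of (T1_u A B lam mu t q))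
    (fun t q => ptheta_of (T1_u A B lam mu t q) (T1_v A B lam mu t q)) th p 1 /\
  Ham A B (theta_of (T1_u A B lam mu th p))
    (ptheta_of (T1_u A B lam mu th p) (T1_v A B lam mu th p)) = Ham A B th p.
Proof.
  intros th_range del_pos [dmt [dmp branch]] x12 U_small.
  assert (near0 : forall x, Rabs (x - x) < del)
    by (intro; rewrite Rminus_diag, Rabs_R0; exact del_pos).
  destruct (Ham_partials A B th p th_range) as [Et DH].
  assert (Dmu := proj1 (proj2 (branch th p (near0 th) (near0 p)))).
  assert (P_jet := point_jet A B th p Et th_range (proj1 DH)).
  assert (Q_jet := sqrt_branch_jet A B lam th p del (Ham A B) mu del_pos
    (fun t q t_near q_near => proj1 (branch t q t_near q_near)) _ _ _ _ DH Dmu).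
  destruct (add_partials _ _ _ _ _ th p _ _ _ _ _ _ _ _ _ _ DH (cos_partials th p)
              (sin_mul_partials th p) (const_partials lam th p) Dmu x12) as [DU DV].
  assert (PQ_jet := add_jet _ _ _ _ _ _ _ _ _ _ _ _ _ _ _ _ _ _ _ x12 P_jet Q_jet).
  rewrite Rplus_0_r in PQ_jet.
  destruct (Req_dec Et 0) as [Et0|Et_neq0]; [destruct (Req_dec p 0) as [p0|p_neq0]|].
  - (* At a critical point of H the phase point is a double point of X_H. *)
    subst Et p. apply Rabs_def2 in U_small.
    split; [|apply Ham_chart; [lra|apply PQ_jet]].
    apply (chart_bracket (T1_u A B lam mu) (T1_v A B lam mu) th 0 _ _ _ _ 1 DU DV); [lra|].
    rewrite !Rmult_0_r in *.
    destruct P_jet as [on1 [T1t _]]. destruct Q_jet as [on2 [T2t [T2q _]]].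
    assert (sin_pos := sin_gt_0 th ltac:(lra) ltac:(lra)).
    assert (f1_0 : dfE A B (Ham A B th 0) (cos th) = 0).
    { unfold tangent_velocity in T1t. rewrite !Rmult_0_r, Rplus_0_r in T1t.
      symmetry in T1t. apply Rmult_integral in T1t as [|]; lra. }
    assert (x3_1 := add_x_singular _ _ _ _ _ _ _ x12 on1 on2 eq_refl f1_0).
    unfold T1_u. rewrite Rmult_0_r, x3_1.
    rewrite (bracket_add_singular _ _ _ _ _ _ _ _ _ _ _ _ x12 x3_1 T2t T2q).
    pose proof (sin2_cos2 th) as sc. unfold bracket, Rsqr in *. simpl. lra.
  - exact (jet_canonical A B (T1_u A B lam mu) (T1_v A B lam mu) th p Et _ _ _ _ 1
             DU DV PQ_jet (or_intror p_neq0) U_small).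
  - exact (jet_canonical A B (T1_u A B lam mu) (T1_v A B lam mu) th p Et _ _ _ _ 1
             DU DV PQ_jet (or_introl Et_neq0) U_small).
Qed.

Lemma doubling_backlund A B th p :
  0 < th < PI -> sin th * p <> 0 -> Rabs (T2_u A B th p) < 1 ->
  poisson_bracket_eq (fun t q => theta_of (T2_u A B t q))
    (fun t q => ptheta_of (T2_u A B t q) (T2_v A B t q)) th p 2 /\
  Ham A B (theta_of (T2_u A B th p)) (ptheta_of (T2_u A B th p) (T2_v A B th p))
    = Ham A B th p.
Proof.
  intros th_range y_neq0 U_small.
  destruct (Ham_partials A B th p th_range) as [Et DH].
  assert (P_jet := point_jet A B th p Et th_range (proj1 DH)).
  destruct (dbl_partials A B _ _ _ th p _ _ _ _ _ _ DH (cos_partials th p)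
              (sin_mul_partials th p) y_neq0) as [DU DV].
  assert (P2_jet := dbl_jet _ _ _ _ _ _ _ _ _ _ _ _ y_neq0 P_jet).
  replace (2 * - 1) with (- 2) in P2_jet by ring.
  apply (jet_canonical A B (T2_u A B) (T2_v A B) th p Et _ _ _ _ 2 DU DV P2_jet);
    [right; intros ->; apply y_neq0; ring|exact U_small].
Qed.

Lemma tripling_backlund A B th p :
  0 < th < PI -> sin th * p <> 0 -> T2_u A B th p <> cos th -> Rabs (T3_u A B th p) < 1 ->
  poisson_bracket_eq (fun t q => theta_of (T3_u A B t q))
    (fun t q => ptheta_of (T3_u A B t q) (T3_v A B t q)) th p 3 /\
  Ham A B (theta_of (T3_u A B th p)) (ptheta_of (T3_u A B th p) (T3_v A B th p))
    = Ham A B th p.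
Proof.
  intros th_range y_neq0 x12 U_small.
  destruct (Ham_partials A B th p th_range) as [Et DH].
  assert (P_jet := point_jet A B th p Et th_range (proj1 DH)).
  destruct (dbl_partials A B _ _ _ th p _ _ _ _ _ _ DH (cos_partials th p)
              (sin_mul_partials th p) y_neq0) as [DU2 DV2].
  assert (P2_jet := dbl_jet _ _ _ _ _ _ _ _ _ _ _ _ y_neq0 P_jet).
  destruct (add_partials _ _ _ _ _ th p _ _ _ _ _ _ _ _ _ _ DH (cos_partials th p)
              (sin_mul_partials th p) DU2 DV2 (not_eq_sym x12)) as [DU DV].
  assert (P3_jet :=
    add_jet _ _ _ _ _ _ _ _ _ _ _ _ _ _ _ _ _ _ _ (not_eq_sym x12) P_jet P2_jet).
  replace (- 1 + 2 * - 1) with (- 3) in P3_jet by ring.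
  apply (jet_canonical A B (T3_u A B) (T3_v A B) th p Et _ _ _ _ 3 DU DV P3_jet);
    [right; intros ->; apply y_neq0; ring|exact U_small].
Qed.

Theorem proposition1 :
  (forall A B th p, 0 < th < PI ->
     (sin th * p) ^ 2 = fE A B (Ham A B th p) (cos th)) /\
  (forall A B lam (mu : R -> R -> R) th p del,
     0 < th < PI -> 0 < del ->
     C1_sqrt_branch A B lam mu th p del ->
     cos th <> lam ->
     Rabs (T1_u A B lam mu th p) < 1 ->
     poisson_bracket_eq
       (fun t q => theta_of (T1_u A B lam mu t q))
       (fun t q => ptheta_of (T1_u A B lam mu t q) (T1_v A B lam mu t q)) th p 1 /\
     Ham A B (theta_of (T1_u A B lam mu th p))
             (ptheta_of (T1_u A B lam mu th p) (T1_v A B lam mu th p))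
       = Ham A B th p) /\
  (forall A B th p,
     0 < th < PI -> sin th * p <> 0 ->
     Rabs (T2_u A B th p) < 1 ->
     poisson_bracket_eq
       (fun t q => theta_of (T2_u A B t q))
       (fun t q => ptheta_of (T2_u A B t q) (T2_v A B t q)) th p 2 /\
     Ham A B (theta_of (T2_u A B th p)) (ptheta_of (T2_u A B th p) (T2_v A B th p))
       = Ham A B th p) /\
  (forall A B th p,
     0 < th < PI -> sin th * p <> 0 ->
     T2_u A B th p <> cos th ->
     Rabs (T3_u A B th p) < 1 ->
     poisson_bracket_eq
       (fun t q => theta_of (T3_u A B t q))
       (fun t q => ptheta_of (T3_u A B t q) (T3_v A B t q)) th p 3 /\
     Ham A B (theta_of (T3_u A B th p)) (ptheta_of (T3_u A B th p) (T3_v A B th p))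
       = Ham A B th p).
Proof.
  split; [exact Ham_on_curve|].
  split; [exact addition_backlund|].
  split; [exact doubling_backlund|exact tripling_backlund].
Qed.
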